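(* The Dehn function of $K=\ker\big(\psi\colon F_2^{(a)}\times F_2^{(b)}\times F_2^{(c)}\to\mathbb Z^2\big)$ satisfies $\delta_K(N)\succcurlyeq N^4$.
   Context: $F_2^{(a)},F_2^{(b)},F_2^{(c)}$ are free groups with bases $a_1,a_2$; $b_1,b_2$; $c_1,c_2$, and $\psi$ sends $a_i,b_i,c_i$ to the $i$-th standard basis vector $e_i$; $K$ is finitely presented. The Dehn function of a finitely presented $G=\langle S\mid\mathcal R\rangle$ is $\delta_G(N)=\max\{\mathrm{Area}(w):|w|\le N,\ w=_G1\}$, where $\mathrm{Area}(w)$ is the least number of conjugates of elements of $\mathcal R^{\pm1}$ whose product is $w$ in $F(S)$. For $f,g\colon\mathbb N\to\mathbb N$, $g\succcurlyeq f$ means $f(N)\le Cg(CN+C)+CN+C$ for some $C>0$. *)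

From mathcomp Require Import all_boot.
From Stdlib Require Import ClassicalEpsilon.
Set Implicit Arguments. Unset Strict Implicit. Unset Printing Implicit Defensive.

(* A letter over an alphabet A is (a, b): b = false means a, b = true means a^-1. *)
Definition word (A : eqType) := seq (A * bool).

Definition linv (A : eqType) (x : A * bool) : A * bool := (x.1, ~~ x.2).

Definition winv (A : eqType) (w : word A) : word A := rev (map (@linv A) w).

Fixpoint freduce (A : eqType) (w : word A) : word A :=
  match w with
  | [::] => [::]
  | x :: w' =>
      match freduce w' with
      | y :: w'' => if y == linv x then w'' else x :: y :: w''
      | [::] => [:: x]
      end
  end.

Definition feq (A : eqType) (u v : word A) : Prop := freduce u = freduce v.

(* A generator (i, j) : 'I_3 * 'I_2 is the j-th basis element of the i-th free
   factor (i = 0,1,2 for a,b,c).  Elements of G are represented by words;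
   two words are equal in G iff their projections to each factor are equal
   in F_2. *)
Definition Gen := ('I_3 * 'I_2)%type.

Definition proj (i : 'I_3) (w : word Gen) : word 'I_2 :=
  [seq (l.1.2, l.2) | l <- w & l.1.1 == i].

Definition Geq (u v : word Gen) : Prop :=
  forall i : 'I_3, feq (proj i u) (proj i v).

(* psi : G -> Z^2 sends a_j, b_j, c_j to e_j; so psi(w) = 0 iff for each
   j the exponent sum of letters with index j is 0 (number of positive
   occurrences equals number of negative occurrences). *)
Definition inK (w : word Gen) : Prop :=
  forall j : 'I_2,
    count (fun l : Gen * bool => (l.1.2 == j) && ~~ l.2) w =
    count (fun l : Gen * bool => (l.1.2 == j) && l.2) w.

Definition evalw (S : finType) (gens : S -> word Gen) (u : word S) : word Gen :=
  flatten [seq (if l.2 then winv (gens l.1) else gens l.1) | l <- u].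

Definition conj_prod (S : finType) (l : seq (word S * word S * bool)) : word S :=
  flatten [seq (x.1.1 ++ (if x.2 then winv x.1.2 else x.1.2) ++ winv x.1.1) | x <- l].

Definition vk_expr (S : finType) (R : seq (word S)) (u : word S)
    (l : seq (word S * word S * bool)) : Prop :=
  all (fun x => x.1.2 \in R) l /\ feq (conj_prod l) u.

Definition null (S : finType) (R : seq (word S)) (u : word S) : Prop :=
  exists l, vk_expr R u l.

Definition presents_K (S : finType) (gens : S -> word Gen) (R : seq (word S)) : Prop :=
  [/\ forall s, inK (gens s),
      forall w, inK w -> exists u : word S, Geq (evalw gens u) w
    & forall u : word S, Geq (evalw gens u) [::] <-> null R u].

(* Area(u): least number of conjugates of relators whose product is u
   (0 if u is not null-homotopic; never used in that case). *)
Definition Area (S : finType) (R : seq (word S)) (u : word S) : nat :=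
  epsilon (inhabits 0%N)
    (fun n => (exists l, vk_expr R u l /\ size l = n) /\
              forall l, vk_expr R u l -> n <= size l).

Definition Dehn (S : finType) (R : seq (word S)) (N : nat) : nat :=
  epsilon (inhabits 0%N)
    (fun d => (exists w : word S, size w <= N /\ null R w /\ Area R w = d) /\
              forall w : word S, size w <= N -> null R w -> Area R w <= d).

Definition dominates (g f : nat -> nat) : Prop :=
  exists C : nat, 0 < C /\ forall N, f N <= C * g (C * N + C) + C * N + C.

(* Let N be the nilpotent group of class 3 given in coordinates by [nil3], into which F_2
   maps by sending its basis to the two coordinate vectors of weight 1, and let
   x = (x1, x2) be its abelianisation.  The group K maps into the subgroup [fiber] of N^3
   cut out by x(a) + x(b) + x(c) = 0, and an explicit polynomial 2-cocycle [omega] on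
   [fiber] defines a central extension E of it by Z.  Sending the generators of a finite
   presentation of K to their images in [fiber], with central coordinate 0, defines a
   homomorphism F(S) -> E that maps every relator into the centre; hence the central
   coordinate of a null-homotopic word is at most its area times a constant M depending
   only on the relators.

   With x_j = a_j c_j^-1 and y_j = b_j c_j^-1, the word
     [ [x1^n, x2^n] [x1^n, y2^n]^-1 , [y1^n, y2^n] [y1^n, x2^n]^-1 ]
   has length O(n) and is trivial in K: in each of the three factors one of its two
   halves is already trivial.  In E the halves project to commuting elements A, B of
   [N,N] x 1 x 1 and 1 x [N,N] x 1, and the central coordinate of the lifted commutator
   is omega(A, B) - omega(B, A) = 3 z(A) z(B) = 12 n^4, and the area of the word is at
   least 12 n^4 / M. *)

From Stdlib Require Import ZArith Lia ClassicalEpsilon.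
From HB Require Import structures.
From mathcomp Require Import all_boot zify ssrZ.
Set Implicit Arguments. Unset Strict Implicit. Unset Printing Implicit Defensive.
Import ssrZ.Instances.

(** * Free reduction and free groups *)

Section FreeReduction.
Variable A : eqType.
Implicit Types (x y : A * bool) (u v w : word A).

Lemma linvK : involutive (@linv A).
Proof. by case=> a b; rewrite /linv negbK. Qed.

Fixpoint reduced w : bool :=
  if w is x :: ((y :: _) as w') then (y != linv x) && reduced w' else true.

Definition fstep x w : word A :=
  if w is y :: w' then (if y == linv x then w' else x :: y :: w') else [:: x].

Lemma freduce_cons x w : freduce (x :: w) = fstep x (freduce w).
Proof. by []. Qed.

Lemma reduced_behead x w : reduced (x :: w) -> reduced w.
Proof. by case: w => //= y w /andP[]. Qed.

Lemma freduce_reduced w : reduced (freduce w).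
Proof.
elim: w => [|x w] //=; rewrite -/(fstep x _).
case: (freduce w) => [|y r] //= red_yr; case: ifP => [_|/negbT/= -> //].
exact: reduced_behead red_yr.
Qed.

Lemma freduce_id w : reduced w -> freduce w = w.
Proof.
elim: w => [|x w IHw] // red_xw.
rewrite freduce_cons IHw; last exact: reduced_behead red_xw.
by case: w red_xw {IHw} => [|y w] //= /andP[/negbTE->].
Qed.

Lemma freduce_idem w : freduce (freduce w) = freduce w.
Proof. exact/freduce_id/freduce_reduced. Qed.

Lemma fstepK x w : reduced w -> fstep x (fstep (linv x) w) = w.
Proof.
case: w => [|y w] /=; first by rewrite eqxx.
rewrite linvK; have [->|neq_yx] := eqVneq y x => red_yw; last by rewrite /= eqxx.
by case: w red_yw => [|z w] //= /andP[/negbTE->].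
Qed.

Lemma freduce_catr u v : freduce (u ++ v) = freduce (u ++ freduce v).
Proof. by elim: u => [|x u IHu] /=; rewrite ?freduce_idem // -!/(fstep x _) IHu. Qed.

Lemma freduce_fstep_cat x w v :
  reduced w -> freduce (fstep x w ++ v) = fstep x (freduce (w ++ v)).
Proof.
case: w => [|y w] //= red_yw; case: ifP => // /eqP->.
by rewrite -/(fstep (linv x) _) fstepK // freduce_reduced.
Qed.

Lemma freduce_catl u v : freduce (u ++ v) = freduce (freduce u ++ v).
Proof.
elim: u => [|x u IHu] //=.
by rewrite -!/(fstep x _) IHu freduce_fstep_cat // freduce_reduced.
Qed.

Lemma winv_cons x w : winv (x :: w) = winv w ++ [:: linv x].
Proof. by rewrite /winv /= rev_cons cats1. Qed.

Lemma winv_cat u v : winv (u ++ v) = winv v ++ winv u.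
Proof. by rewrite /winv map_cat rev_cat. Qed.

Lemma winvK : involutive (@winv A).
Proof. by move=> w; rewrite /winv map_rev revK -map_comp (eq_map linvK) map_id. Qed.

Lemma size_winv w : size (winv w) = size w.
Proof. by rewrite size_rev size_map. Qed.

Lemma freduce_winvr w : freduce (w ++ winv w) = [::].
Proof.
elim: w => [|x w IHw] //.
by rewrite winv_cons /= -/(fstep x _) catA freduce_catl IHw /= eqxx.
Qed.

Lemma freduce_winvl w : freduce (winv w ++ w) = [::].
Proof. by rewrite -{2}(winvK w) freduce_winvr. Qed.

End FreeReduction.

Local Open Scope group_scope.

Section WordEvaluation.
Variables (A : eqType) (G : groupType) (f : A -> G).
Implicit Types (x : A * bool) (u v w : word A).

Definition eval_letter x : G := if x.2 then (f x.1)^-1 else f x.1.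

Definition weval w : G := foldr (fun x g => eval_letter x * g) 1 w.

Lemma weval_cons x w : weval (x :: w) = eval_letter x * weval w.
Proof. by []. Qed.

Lemma weval_cat u v : weval (u ++ v) = weval u * weval v.
Proof. by elim: u => [|x u IHu] /=; rewrite ?mul1g // IHu mulgA. Qed.

Lemma eval_letter_linv x : eval_letter (linv x) = (eval_letter x)^-1.
Proof. by case: x => a []; rewrite /eval_letter /= ?invgK. Qed.

Lemma weval_winv w : weval (winv w) = (weval w)^-1.
Proof.
elim: w => [|x w IHw]; first by rewrite invg1.
by rewrite winv_cons weval_cat IHw /= mulg1 eval_letter_linv invgM.
Qed.

Lemma weval_freduce w : weval (freduce w) = weval w.
Proof.
elim: w => [|x w IHw] //=; rewrite -IHw -/(fstep x _).
case: (freduce w) => [|y r] //=; case: ifP => // /eqP->.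
by rewrite mulgA eval_letter_linv mulgV mul1g.
Qed.

Lemma weval_feq u v : feq u v -> weval u = weval v.
Proof. by move=> uv; rewrite -weval_freduce uv weval_freduce. Qed.

End WordEvaluation.

Record free_group (A : choiceType) := FreeGroup { fg_val : word A; _ : reduced fg_val }.

Section FreeGroup.
Variable A : choiceType.

HB.instance Definition _ := [isSub for @fg_val A].
HB.instance Definition _ := [Choice of free_group A by <:].

Definition fg_reduce (w : word A) : free_group A := FreeGroup (freduce_reduced w).
Definition fg_one := fg_reduce [::].
Definition fg_mul (u v : free_group A) := fg_reduce (val u ++ val v).
Definition fg_inv (u : free_group A) := fg_reduce (winv (val u)).

Lemma fg_mulA : associative fg_mul.
Proof. by move=> u v w; apply: val_inj; rewrite /= -freduce_catr -freduce_catl catA. Qed.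

Lemma fg_mul1 : left_id fg_one fg_mul.
Proof. by case=> w red_w; apply: val_inj; rewrite /= freduce_id. Qed.

Lemma fg_mulr1 : right_id fg_one fg_mul.
Proof. by case=> w red_w; apply: val_inj; rewrite /= cats0 freduce_id. Qed.

Lemma fg_mulV : left_inverse fg_one fg_inv fg_mul.
Proof. by move=> u; apply: val_inj; rewrite /= -freduce_catl freduce_winvl. Qed.

Lemma fg_mulVr : right_inverse fg_one fg_inv fg_mul.
Proof. by move=> u; apply: val_inj; rewrite /= -freduce_catr freduce_winvr. Qed.

HB.instance Definition _ :=
  isGroup.Build (free_group A) fg_mulA fg_mul1 fg_mulr1 fg_mulV fg_mulVr.

Definition fg_word : word A -> free_group A := weval (fun a => fg_reduce [:: (a, false)]).

Lemma fg_wordE w : fg_word w = fg_reduce w.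
Proof.
elim: w => [|x w IHw]; first exact: val_inj.
rewrite [fg_word _]weval_cons -/(fg_word w) IHw; apply: val_inj => /=.
have -> : fg_val (eval_letter (fun a => fg_reduce [:: (a, false)]) x) = [:: x].
  by case: x => a [].
by rewrite -freduce_catr.
Qed.

Lemma feq_fg_word u v : feq u v <-> fg_word u = fg_word v.
Proof. by rewrite !fg_wordE; split=> [uv|/(congr1 val)//]; apply: val_inj. Qed.

End FreeGroup.

(** * Central extensions and the area of null-homotopic words *)

Record cocycle (Q : groupType) := Cocycle {
  cocycle_fun :> Q -> Q -> Z;
  cocycleP : forall g h k,
    (cocycle_fun g h + cocycle_fun (g * h) k = cocycle_fun h k + cocycle_fun g (h * k))%Z;
  cocycle1g : forall g, cocycle_fun 1 g = 0%Z;
  cocycleg1 : forall g, cocycle_fun g 1 = 0%Z }.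

Definition cext (Q : groupType) (c : cocycle Q) : Type := (Q * Z)%type.

Section CentralExtension.
Variables (Q : groupType) (c : cocycle Q).
Implicit Types (g h : Q) (s t : Z) (x y : cext c).

HB.instance Definition _ := Choice.copy (cext c) (Q * Z)%type.

Definition cext_mul x y : cext c := (x.1 * y.1, (x.2 + y.2 + c x.1 y.1)%Z).
Definition cext_one : cext c := (1, 0%Z).
Definition cext_inv x : cext c := (x.1^-1, (- x.2 - c x.1 x.1^-1)%Z).

Lemma cext_mulA : associative cext_mul.
Proof.
move=> [g s] [h t] [k u]; rewrite /cext_mul /= mulgA; congr (_, _).
have := cocycleP c g h k; lia.
Qed.

Lemma cext_mul1 : left_id cext_one cext_mul.
Proof. by move=> [g s]; rewrite /cext_mul /= mul1g cocycle1g; congr (_, _); lia. Qed.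

Lemma cext_mulr1 : right_id cext_one cext_mul.
Proof. by move=> [g s]; rewrite /cext_mul /= mulg1 cocycleg1; congr (_, _); lia. Qed.

Lemma cext_mulV : left_inverse cext_one cext_inv cext_mul.
Proof.
move=> [g s]; rewrite /cext_mul /= mulVg; congr (_, _).
have := cocycleP c g g^-1 g; rewrite mulgV mulVg cocycle1g cocycleg1; lia.
Qed.

Lemma cext_mulVr : right_inverse cext_one cext_inv cext_mul.
Proof. by move=> [g s]; rewrite /cext_mul /= mulgV; congr (_, _); lia. Qed.

HB.instance Definition _ :=
  isGroup.Build (cext c) cext_mulA cext_mul1 cext_mulr1 cext_mulV cext_mulVr.

Lemma cext_mulE g s h t : ((g, s) : cext c) * (h, t) = (g * h, (s + t + c g h)%Z).
Proof. by []. Qed.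

Lemma cext_oneE : (1 : cext c) = (1, 0%Z).
Proof. by []. Qed.

Lemma cext_fstM x y : (x * y).1 = x.1 * y.1.
Proof. by []. Qed.

Lemma cext_fstV x : (x^-1).1 = x.1^-1.
Proof. by []. Qed.

Lemma cext_fstX x n : (x ^+ n).1 = x.1 ^+ n.
Proof. by elim: n => [|n IHn] //; rewrite !expgS cext_fstM IHn. Qed.

Lemma cext_centralM t x : ((1, t) : cext c) * x = (x.1, (t + x.2)%Z).
Proof. by case: x => g s /=; rewrite cext_mulE mul1g cocycle1g; congr (_, _); lia. Qed.

Lemma cext_central_commute t x : commute ((1, t) : cext c) x.
Proof.
case: x => g s; rewrite /commute cext_centralM /= cext_mulE mulg1 cocycleg1.
by congr (_, _); lia.
Qed.

Lemma cext_centralV t : ((1, t) : cext c)^-1 = (1, (- t)%Z).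
Proof.
apply: (mulgI ((1, t) : cext c)); rewrite mulgV cext_centralM cext_oneE /=.
by congr (_, _); lia.
Qed.

Lemma cext_central_conj t x : x * (1, t) * x^-1 = (1, t).
Proof. by rewrite -cext_central_commute mulgK. Qed.

Lemma cext_mul_central t x : x * (1, t) = (x.1, (x.2 + t)%Z).
Proof. by rewrite -cext_central_commute cext_centralM; congr (_, _); lia. Qed.

Lemma cext_fstR x y : ([~ x, y]).1 = [~ x.1, y.1].
Proof. by []. Qed.

Lemma cext_commg x y : commute x.1 y.1 -> [~ x, y] = (1, (c x.1 y.1 - c y.1 x.1)%Z).
Proof.
case: x y => [g s] [h t] /= gh; apply: (mulgI (((h, t) : cext c) * (g, s))).
rewrite -commgC cext_mul_central !cext_mulE /= gh.
by congr (_, _); lia.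
Qed.

End CentralExtension.

Definition classic_bool (P : Prop) : bool := if excluded_middle_informative P then true else false.

Lemma classic_boolP (P : Prop) : reflect P (classic_bool P).
Proof. by rewrite /classic_bool; case: excluded_middle_informative => /= p; constructor. Qed.

Lemma classic_ex_minn (P : nat -> Prop) :
  (exists n, P n) -> exists2 n, P n & forall m, P m -> n <= m.
Proof.
case=> n Pn; have exP : exists n, classic_bool (P n) by exists n; apply/classic_boolP.
by case: (ex_minnP exP) => m /classic_boolP Pm min_m; exists m => // k /classic_boolP /min_m.
Qed.

Lemma classic_ex_maxn (P : nat -> Prop) b :
  (exists n, P n) -> (forall n, P n -> n <= b) -> exists2 n, P n & forall m, P m -> m <= n.
Proof.
case=> n Pn le_b; have exP : exists n, classic_bool (P n) by exists n; apply/classic_boolP.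
have ubP k : classic_bool (P k) -> k <= b by move/classic_boolP/le_b.
by case: (ex_maxnP exP ubP) => m /classic_boolP Pm max_m; exists m => // k /classic_boolP /max_m.
Qed.

Fixpoint words_upto (T : finType) (m : nat) : seq (seq T) :=
  if m is m'.+1 then [::] :: [seq x :: w | x <- enum T, w <- words_upto T m'] else [:: [::]].

Lemma mem_words_upto (T : finType) m (w : seq T) : size w <= m -> w \in words_upto T m.
Proof.
elim: m w => [|m IHm] [|x w] //= le_wm.
by rewrite in_cons; apply/orP; right; apply: allpairs_f; rewrite ?mem_enum ?IHm.
Qed.

Section AreaAndDehn.
Variables (S : finType) (R : seq (word S)).

Lemma Area_spec u : null R u -> exists2 l, vk_expr R u l & size l = Area R u.
Proof.
case=> l0 vk_l0.
have [n [l vk_l sz_l] min_n] : exists2 n, exists2 l, vk_expr R u l & size l = n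
    & forall m, (exists2 l, vk_expr R u l & size l = m) -> n <= m.
  by apply: classic_ex_minn; exists (size l0), l0.
have Area_ex : exists n, (exists l, vk_expr R u l /\ size l = n) /\
                         forall l, vk_expr R u l -> n <= size l.
  by exists n; split=> [|l' vk_l']; [exists l | apply: min_n; exists l'].
by have [[l' [vk_l' sz_l']] _] := epsilon_spec (inhabits 0) _ Area_ex; exists l'.
Qed.

Lemma Area_le_Dehn m w : size w <= m -> null R w -> Area R w <= Dehn R m.
Proof.
move=> le_wm null_w.
pose P d := exists w, [/\ size w <= m, null R w & Area R w = d].
have [d Pd max_d] : exists2 d, P d & forall d', P d' -> d' <= d.
  apply: (@classic_ex_maxn _ (\max_(w <- words_upto _ m) Area R w)).
    by exists (Area R [::]), [::]; split=> //; exists [::].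
  move=> _ [w' [le_w'm _ <-]].
  exact: (leq_bigmax_seq _ (mem_words_upto le_w'm)).
have Dehn_ex : exists d, (exists w, size w <= m /\ null R w /\ Area R w = d) /\
                         forall w, size w <= m -> null R w -> Area R w <= d.
  case: Pd => w' [? ? ?]; exists d; split=> [|w'' ? ?]; first by exists w'.
  by apply: max_d; exists w''.
by have [_ ->] := epsilon_spec (inhabits 0) _ Dehn_ex.
Qed.

End AreaAndDehn.

Lemma abs_nat_add_le (a b : Z) m n :
  Z.abs_nat a <= m -> Z.abs_nat b <= n -> Z.abs_nat (a + b) <= m + n.
Proof. lia. Qed.

Section AreaBound.
Variables (S : finType) (R : seq (word S)) (Q : groupType) (c : cocycle Q) (f : S -> cext c).
Hypothesis relator_central : forall r, r \in R -> (weval f r).1 = 1.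

Definition relator_weight : nat := sumn [seq Z.abs_nat (weval f r).2 | r <- R].

Lemma leq_relator_weight r : r \in R -> Z.abs_nat (weval f r).2 <= relator_weight.
Proof.
rewrite /relator_weight; elim: R => [|r' R' IHR] //=.
by rewrite in_cons => /orP[/eqP-> | /IHR]; lia.
Qed.

Lemma weval_relatorE r : r \in R -> weval f r = (1, (weval f r).2).
Proof. by move=> r_R; rewrite {1}[weval f r]surjective_pairing relator_central. Qed.

Lemma weval_conj_prod l : all (fun x => x.1.2 \in R) l ->
  (weval f (conj_prod l)).1 = 1 /\
  Z.abs_nat (weval f (conj_prod l)).2 <= size l * relator_weight.
Proof.
elim: l => [|[[g r] b] l IHl] //; rewrite [all _ _]/= => /andP[r_R /IHl[l_central l_bound]].
have -> : conj_prod ((g, r, b) :: l) = g ++ (if b then winv r else r) ++ winv g ++ conj_prod l.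
  by rewrite /conj_prod /= !catA.
have conjugate : weval f (if b then winv r else r) =
                  (1, if b then (- (weval f r).2)%Z else (weval f r).2).
  by case: b; rewrite ?weval_winv weval_relatorE // cext_centralV.
rewrite !weval_cat weval_winv conjugate !mulgA cext_central_conj cext_centralM l_central.
split=> //; rewrite mulSn; apply: abs_nat_add_le l_bound.
by have := leq_relator_weight r_R; case: b conjugate => _; lia.
Qed.

Lemma weval_snd_le_Area u : null R u -> Z.abs_nat (weval f u).2 <= Area R u * relator_weight.
Proof.
move=> /Area_spec[l [l_R feq_l] <-].
by rewrite -(weval_feq f feq_l); case: (weval_conj_prod l_R).
Qed.

End AreaBound.

(** * A nilpotent group of class 3 and the image of K *)

Definition i0 : 'I_3 := ord0.
Definition i1 : 'I_3 := @Ordinal 3 1 isT.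
Definition i2 : 'I_3 := @Ordinal 3 2 isT.
Definition j0 : 'I_2 := ord0.
Definition j1 : 'I_2 := @Ordinal 2 1 isT.

Lemma ord2P (j : 'I_2) : j = j0 \/ j = j1.
Proof. by case: j => [[|[|m]] lt_j2]; [left|right|]; try apply: val_inj. Qed.

Lemma ord3P (i : 'I_3) : [\/ i = i0, i = i1 | i = i2].
Proof.
by case: i => [[|[|[|m]]] lt_i3]; [constructor 1|constructor 2|constructor 3|]; try apply: val_inj.
Qed.

(* Coordinates of weight 1 (x1, x2), 2 (zz) and 3 (t1, t2), chosen so that inversion is
   negation. *)
Record nil3 := Nil3 { x1 : Z; x2 : Z; zz : Z; t1 : Z; t2 : Z }.

Definition nil3_coords (g : nil3) := (x1 g, x2 g, zz g, t1 g, t2 g).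
Definition coords_nil3 (p : Z * Z * Z * Z * Z) := let: (a, b, c, d, e) := p in Nil3 a b c d e.
Lemma nil3_coordsK : cancel nil3_coords coords_nil3. Proof. by case. Qed.
HB.instance Definition _ := Choice.copy nil3 (can_type nil3_coordsK).

Section Nil3Group.
Local Open Scope Z_scope.

Definition nil3_mul (g h : nil3) : nil3 :=
  let w := x1 g * x2 h - x2 g * x1 h in
  Nil3 (x1 g + x1 h) (x2 g + x2 h) (zz g + zz h + w)
       (t1 g + t1 h + 3 * (x1 g * zz h - zz g * x1 h) + (x1 g - x1 h) * w)
       (t2 g + t2 h + 3 * (x2 g * zz h - zz g * x2 h) + (x2 g - x2 h) * w).
Definition nil3_inv (g : nil3) : nil3 := Nil3 (- x1 g) (- x2 g) (- zz g) (- t1 g) (- t2 g).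
Definition nil3_one : nil3 := Nil3 0 0 0 0 0.

Ltac nil3_ring := repeat match goal with g : nil3 |- _ => destruct g end;
  cbv [nil3_mul nil3_inv nil3_one x1 x2 zz t1 t2]; f_equal; ring.

Lemma nil3_mulA : associative nil3_mul. Proof. move=> g h k; nil3_ring. Qed.
Lemma nil3_mul1 : left_id nil3_one nil3_mul. Proof. move=> g; nil3_ring. Qed.
Lemma nil3_mulr1 : right_id nil3_one nil3_mul. Proof. move=> g; nil3_ring. Qed.
Lemma nil3_mulV : left_inverse nil3_one nil3_inv nil3_mul. Proof. move=> g; nil3_ring. Qed.
Lemma nil3_mulVr : right_inverse nil3_one nil3_inv nil3_mul. Proof. move=> g; nil3_ring. Qed.

End Nil3Group.

HB.instance Definition _ :=
  isGroup.Build nil3 nil3_mulA nil3_mul1 nil3_mulr1 nil3_mulV nil3_mulVr.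

Lemma nil3M (g h : nil3) : g * h = nil3_mul g h. Proof. by []. Qed.
Lemma nil3V (g : nil3) : g^-1 = nil3_inv g. Proof. by []. Qed.
Lemma nil3_oneE : (1 : nil3) = Nil3 0 0 0 0 0. Proof. by []. Qed.

Lemma x1M (g h : nil3) : x1 (g * h) = (x1 g + x1 h)%Z. Proof. by []. Qed.
Lemma x2M (g h : nil3) : x2 (g * h) = (x2 g + x2 h)%Z. Proof. by []. Qed.

Lemma x1_commg (g h : nil3) : x1 [~ g, h] = 0%Z.
Proof. by rewrite /commg /conjg !x1M !nil3V /=; lia. Qed.

Lemma x2_commg (g h : nil3) : x2 [~ g, h] = 0%Z.
Proof. by rewrite /commg /conjg !x2M !nil3V /=; lia. Qed.

Lemma nil3_abelian_expg (p q : Z) n :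
  Nil3 p q 0 0 0 ^+ n = Nil3 (Z.of_nat n * p) (Z.of_nat n * q) 0 0 0.
Proof.
elim: n => [|n IHn]; first by rewrite expg0 nil3_oneE; congr Nil3; lia.
rewrite expgS IHn nil3M Nat2Z.inj_succ; cbv [nil3_mul x1 x2 zz t1 t2]; congr Nil3; ring.
Qed.

Lemma zz_commg_abelian (p q p' q' : Z) :
  zz [~ Nil3 p q 0 0 0, Nil3 p' q' 0 0 0] = (2 * (p * q' - q * p'))%Z.
Proof. rewrite /commg /conjg !nil3M !nil3V; cbv [nil3_mul nil3_inv x1 x2 zz t1 t2]; ring. Qed.

Definition nil3_gen (j : 'I_2) : nil3 := if j == j0 then Nil3 1 0 0 0 0 else Nil3 0 1 0 0 0.

Definition commg_gen_pow n : nil3 := [~ nil3_gen j0 ^+ n, nil3_gen j1 ^+ n].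

Lemma zz_commg_gen_pow n : zz (commg_gen_pow n) = (2 * Z.of_nat n ^ 2)%Z.
Proof.
rewrite /commg_gen_pow (_ : nil3_gen j0 = Nil3 1 0 0 0 0) // (_ : nil3_gen j1 = Nil3 0 1 0 0 0) //.
by rewrite !nil3_abelian_expg zz_commg_abelian; ring.
Qed.

Section PairGroup.
Variables G H : groupType.
Implicit Types (a : G) (b : H).

Lemma pair1 : (1 : G * H) = (1, 1).
Proof. by []. Qed.

Lemma pairM a b a' b' : (a, b) * (a', b') = (a * a', b * b').
Proof. by []. Qed.

Lemma pairV a b : (a, b)^-1 = (a^-1, b^-1).
Proof. by []. Qed.

Lemma pairX a b n : (a, b) ^+ n = (a ^+ n, b ^+ n).
Proof. by elim: n => [|n IHn] //; rewrite !expgS IHn. Qed.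

Lemma pairR a b a' b' : [~ (a, b), (a', b')] = ([~ a, a'], [~ b, b']).
Proof. by []. Qed.

End PairGroup.

(* K maps into the balanced triples because psi factors through the abelianisations. *)
Definition balanced (g : nil3 * nil3 * nil3) : bool :=
  let: (a, b, c) := g in (x1 a + x1 b + x1 c == 0)%Z && (x2 a + x2 b + x2 c == 0)%Z.

Lemma balanced_group_closed : group_closed balanced.
Proof.
split=> [//|[[a b] c] [[a' b'] c']] /andP[/eqP e1 /eqP e2] /andP[/eqP e1' /eqP e2'].
by rewrite unfold_in /=; apply/andP; split; apply/eqP; lia.
Qed.

Record fiber := Fiber { fiber_val : nil3 * nil3 * nil3; _ : balanced fiber_val }.
HB.instance Definition _ := [isSub for fiber_val].
HB.instance Definition _ := [Choice of fiber by <:].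
HB.instance Definition _ := SubChoice_isSubGroup.Build _ _ fiber balanced_group_closed.

Lemma val_fiberV (g : fiber) : val g^-1 = (val g)^-1.
Proof. exact: gmulfV. Qed.

Lemma val_fiberX (g : fiber) n : val (g ^+ n) = val g ^+ n.
Proof. exact: gmulfXn. Qed.

Lemma val_fiberR (g h : fiber) : val [~ g, h] = [~ val g, val h].
Proof. exact: gmulfR. Qed.

Lemma fiber_valE (g : fiber) : exists a b c,
  val g = (a, b, Nil3 (- (x1 a + x1 b)) (- (x2 a + x2 b)) (zz c) (t1 c) (t2 c)).
Proof.
case: g => [[[a b] [c1 c2 z u1 u2]] /andP[/= /eqP e1 /eqP e2]].
by exists a, b, (Nil3 c1 c2 z u1 u2); congr (_, _, Nil3 _ _ _ _ _); lia.
Qed.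

(* Homogeneous of weight 4; the x-coordinates of the third factor do not occur. *)
Definition omega (g h : nil3 * nil3 * nil3) : Z :=
  let: (a, b, c) := g in let: (a', b', c') := h in (
  x1 a * t2 a' - 2 * x1 a * x1 a' * x2 a' * x2 b'
  - 4 * x1 a * x1 a' * x2 b' * x2 b' + 2 * x1 a * x2 a' * x2 a' * x1 b'
  - 3 * x1 a * x2 a' * zz a' - 2 * x1 a * x2 a' * x1 b' * x2 b'
  + 3 * x1 a * x2 a' * zz c' - x1 a * t2 b'
  - 2 * x1 a * x1 b' * x2 b' * x2 b' + 3 * x1 a * x2 b' * zz b'
  - 3 * x1 a * x2 b' * zz c' + x1 a * t2 c'
  - 3 * x1 a * x1 a * x2 b' * x2 b' - 6 * x1 a * x1 a * x2 b * x2 a'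
  - 6 * x1 a * x1 a * x2 b * x2 b' + 6 * x1 a * x2 a * x1 b * x2 a'
  - 6 * x1 a * zz a * x2 a' + 6 * x1 a * x1 b * x2 a' * x2 a'
  - 6 * x1 a * x1 b * x2 b * x2 a' - 6 * x1 a * x1 b * x2 b * x2 b'
  - 9 * x1 a * x2 b * x1 a' * x2 a' - 6 * x1 a * x2 b * x1 a' * x2 b'
  - 6 * x1 a * x2 b * x2 a' * x1 b' - 3 * x1 a * x2 b * zz a'
  - 6 * x1 a * x2 b * x1 b' * x2 b' - 6 * x1 a * x2 b * zz c'
  + 6 * x1 a * zz b * x2 b' + 6 * x1 a * zz c * x2 a' + x2 a * t1 b'
  + 2 * x2 a * x1 b' * x1 b' * x2 b' + 3 * x2 a * x1 b' * zz b'
  + 3 * x2 a * x1 b * x1 a' * x2 a' + 3 * x2 a * x1 b * zz a'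
  + 6 * x2 a * x1 b * x1 b' * x2 b' + 6 * x2 a * x1 b * zz b'
  + 6 * x2 a * x1 b * x1 b * x2 b' - 3 * zz a * x1 a' * x2 a'
  - 3 * zz a * zz a' + x1 b * t2 a' + 4 * x1 b * x1 a' * x2 a' * x2 a'
  + 3 * x1 b * x2 a' * zz a' + 6 * x1 b * x2 a' * x1 b' * x2 b'
  + 6 * x1 b * x2 a' * zz b' + 6 * x1 b * x1 b * x2 a' * x2 b'
  - 3 * x1 b * x2 b * x1 a' * x2 a' - 3 * x1 b * x2 b * x1 a' * x2 b'
  - 3 * x1 b * x2 b * x2 a' * x1 b' + 3 * x1 b * x2 b * zz b'
  - 3 * x1 b * x2 b * zz c' + 6 * x1 b * zz b * x2 a' - x2 b * t1 a'
  - 4 * x2 b * x1 a' * x1 a' * x2 a' - 2 * x2 b * x1 a' * x1 a' * x2 b'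
  - 4 * x2 b * x1 a' * x2 a' * x1 b' - 3 * x2 b * x1 a' * zz a'
  - 4 * x2 b * x1 a' * x1 b' * x2 b' - 3 * x2 b * x1 a' * zz c'
  - 2 * x2 b * x2 a' * x1 b' * x1 b' + x2 b * t1 b'
  + 3 * x2 b * x1 b' * zz b' - 3 * x2 b * x1 b' * zz c' + x2 b * t1 c'
  + 3 * zz b * x1 a' * x2 b' + 3 * zz b * x2 a' * x1 b' - 3 * zz b * zz a'
  - 3 * zz b * zz b' + 3 * zz b * zz c' + 3 * zz c * x1 a' * x2 a'
  + 3 * zz c * zz a')%Z.

Definition fiber_omega (g h : fiber) : Z := omega (val g) (val h).

Lemma fiber_omega_cocycle g h k :
  (fiber_omega g h + fiber_omega (g * h)%g k = fiber_omega h k + fiber_omega g (h * k)%g)%Z.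
Proof.
rewrite /fiber_omega !valM.
have [a [b [c ->]]] := fiber_valE g; have [a' [b' [c' ->]]] := fiber_valE h.
have [a'' [b'' [c'' ->]]] := fiber_valE k.
rewrite !pairM !nil3M; repeat match goal with g : nil3 |- _ => destruct g end.
cbv [omega nil3_mul x1 x2 zz t1 t2]; ring.
Qed.

Lemma fiber_omega1g g : fiber_omega 1 g = 0%Z.
Proof.
rewrite /fiber_omega val1 !pair1 nil3_oneE.
case: (val g) => [[[? ? ? ? ?] [? ? ? ? ?]] [? ? ? ? ?]]; cbv [omega x1 x2 zz t1 t2]; ring.
Qed.

Lemma fiber_omegag1 g : fiber_omega g 1 = 0%Z.
Proof.
rewrite /fiber_omega val1 !pair1 nil3_oneE.
case: (val g) => [[[? ? ? ? ?] [? ? ? ? ?]] [? ? ? ? ?]]; cbv [omega x1 x2 zz t1 t2]; ring.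
Qed.

Definition fiber_cocycle : cocycle fiber :=
  Cocycle fiber_omega_cocycle fiber_omega1g fiber_omegag1.

Lemma omega_commutator_pairing (a b : nil3) :
  x1 a = 0%Z -> x2 a = 0%Z -> x1 b = 0%Z -> x2 b = 0%Z ->
  (omega (a, 1%g, 1%g) (1%g, b, 1%g) - omega (1%g, b, 1%g) (a, 1%g, 1%g) = 3 * zz a * zz b)%Z.
Proof.
rewrite nil3_oneE; case: a b => [? ? ? ? ?] [? ? ? ? ?].
by cbv [omega x1 x2 zz t1 t2] => -> -> -> ->; ring.
Qed.

Lemma proj_cat i u v : proj i (u ++ v) = proj i u ++ proj i v.
Proof. by rewrite /proj filter_cat map_cat. Qed.

Lemma proj_winv i w : proj i (winv w) = winv (proj i w).
Proof.
rewrite /proj /winv filter_rev !map_rev; congr rev.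
by elim: w => [|x w IHw] //=; case: ifP => _ //=; rewrite IHw.
Qed.

Lemma Geq_fg_word u v : Geq u v -> forall i, fg_word (proj i u) = fg_word (proj i v).
Proof. by move=> uv i; apply/feq_fg_word/uv. Qed.

Definition rho : word 'I_2 -> nil3 := weval nil3_gen.

Definition piw (w : word Gen) : nil3 * nil3 * nil3 :=
  (rho (proj i0 w), rho (proj i1 w), rho (proj i2 w)).

Lemma piw_cat u v : piw (u ++ v) = piw u * piw v.
Proof. by rewrite /piw /rho !proj_cat !weval_cat. Qed.

Lemma piw_winv w : piw (winv w) = (piw w)^-1.
Proof. by rewrite /piw /rho !proj_winv !weval_winv. Qed.

Lemma piw_Geq u v : Geq u v -> piw u = piw v.
Proof. by move=> uv; rewrite /piw /rho !(weval_feq _ (uv _)). Qed.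

Definition xsum (j : 'I_2) (g : nil3 * nil3 * nil3) : Z :=
  let: (a, b, c) := g in
  if j == j0 then (x1 a + x1 b + x1 c)%Z else (x2 a + x2 b + x2 c)%Z.

Lemma xsumM j g h : xsum j (g * h) = (xsum j g + xsum j h)%Z.
Proof. by case: g h => [[a b] c] [[a' b'] c']; rewrite /xsum /=; case: ifP => _ /=; lia. Qed.

Lemma xsum_piw j w :
  xsum j (piw w) = (Z.of_nat (count (fun l : Gen * bool => (l.1.2 == j) && ~~ l.2) w)
                    - Z.of_nat (count (fun l : Gen * bool => (l.1.2 == j) && l.2) w))%Z.
Proof.
elim: w => [|l w IHw]; first by case: (ord2P j) => ->.
rewrite -cat1s piw_cat xsumM IHw !count_cat.
suff -> : xsum j (piw [:: l]) =
  (Z.of_nat (count (fun l : Gen * bool => (l.1.2 == j) && ~~ l.2) [:: l])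
   - Z.of_nat (count (fun l : Gen * bool => (l.1.2 == j) && l.2) [:: l]))%Z by lia.
by case: l => [[i j'] b]; case: (ord3P i) => ->; case: (ord2P j') => ->;
  case: (ord2P j) => ->; case: b.
Qed.

Lemma balanced_piw w : inK w -> balanced (piw w).
Proof.
move=> wK; have := xsum_piw j0 w; have := xsum_piw j1 w.
rewrite (wK j0) (wK j1) /xsum /balanced; case: (piw w) => [[a b] c] /= e1 e0.
by apply/andP; split; apply/eqP; lia.
Qed.

(** * The test words *)

Section TestWord.
Variable A : eqType.
Implicit Types (u v w : word A).

Definition wcomm u v : word A := winv u ++ winv v ++ u ++ v.
Definition wpow w n : word A := flatten (nseq n w).

Definition half_word u v w n : word A :=
  wcomm (wpow u n) (wpow v n) ++ winv (wcomm (wpow u n) (wpow w n)).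

Definition test_word w1 w2 w3 w4 n : word A :=
  wcomm (half_word w1 w2 w4 n) (half_word w3 w4 w2 n).

Lemma size_wpow w n : size (wpow w n) = (n * size w)%N.
Proof. by elim: n => [|n IHn] //=; rewrite size_cat IHn mulSn. Qed.

Lemma size_test_word w1 w2 w3 w4 n :
  size (test_word w1 w2 w3 w4 n) = (8 * n * (size w1 + size w2 + size w3 + size w4))%N.
Proof.
by rewrite /test_word /half_word /wcomm !(size_cat, size_winv, size_wpow); lia.
Qed.

Variables (G : groupType) (f : A -> G).

Definition test_half (x y z : G) n : G := [~ x ^+ n, y ^+ n] / [~ x ^+ n, z ^+ n].

Definition test_elem (x1 x2 y1 y2 : G) n : G := [~ test_half x1 x2 y2 n, test_half y1 y2 x2 n].

Lemma weval_wcomm u v : weval f (wcomm u v) = [~ weval f u, weval f v].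
Proof. by rewrite /wcomm !weval_cat !weval_winv. Qed.

Lemma weval_wpow w n : weval f (wpow w n) = weval f w ^+ n.
Proof. by elim: n => [|n IHn] //=; rewrite weval_cat IHn expgS. Qed.

Lemma weval_half_word u v w n :
  weval f (half_word u v w n) = test_half (weval f u) (weval f v) (weval f w) n.
Proof. by rewrite /half_word weval_cat weval_winv !weval_wcomm !weval_wpow. Qed.

Lemma weval_test_word w1 w2 w3 w4 n :
  weval f (test_word w1 w2 w3 w4 n) =
  test_elem (weval f w1) (weval f w2) (weval f w3) (weval f w4) n.
Proof. by rewrite /test_word weval_wcomm !weval_half_word. Qed.

Lemma test_half1 y z n : test_half 1 y z n = 1.
Proof. by rewrite /test_half expg1n !comm1g mulgV. Qed.

Lemma test_half_diag x y n : test_half x y y n = 1.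
Proof. exact: mulgV. Qed.

End TestWord.

Lemma cext_fst_test_half (Q : groupType) (c : cocycle Q) (x y z : cext c) n :
  (test_half x y z n).1 = test_half x.1 y.1 z.1 n.
Proof. by rewrite /test_half cext_fstM cext_fstV !cext_fstR !cext_fstX. Qed.

Section FiberTest.
Variables (x1 x2 y1 y2 : fiber).
Hypotheses (vx1 : val x1 = (nil3_gen j0, 1, (nil3_gen j0)^-1))
           (vx2 : val x2 = (nil3_gen j1, 1, (nil3_gen j1)^-1))
           (vy1 : val y1 = (1, nil3_gen j0, (nil3_gen j0)^-1))
           (vy2 : val y2 = (1, nil3_gen j1, (nil3_gen j1)^-1)).

Lemma val_test_half_a n : val (test_half x1 x2 y2 n) = (commg_gen_pow n, 1, 1).
Proof.
rewrite /test_half valM val_fiberV !val_fiberR !val_fiberX vx1 vx2 vy2 !pairX !pairR !pairV !pairM.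
by rewrite !expg1n !commg1 !comm1g invg1 !mulg1 mulgV.
Qed.

Lemma val_test_half_b n : val (test_half y1 y2 x2 n) = (1, commg_gen_pow n, 1).
Proof.
rewrite /test_half valM val_fiberV !val_fiberR !val_fiberX vy1 vy2 vx2 !pairX !pairR !pairV !pairM.
by rewrite !expg1n !commg1 !comm1g invg1 !mulg1 mulgV.
Qed.

Lemma commute_test_halves n : commute (test_half x1 x2 y2 n) (test_half y1 y2 x2 n).
Proof.
apply: val_inj; rewrite [LHS]valM [RHS]valM val_test_half_a val_test_half_b.
by rewrite !pairM !mulg1 !mul1g.
Qed.

Lemma fiber_omega_test_halves n :
  (fiber_omega (test_half x1 x2 y2 n) (test_half y1 y2 x2 n)
   - fiber_omega (test_half y1 y2 x2 n) (test_half x1 x2 y2 n) = 12 * Z.of_nat n ^ 4)%Z.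
Proof.
rewrite /fiber_omega val_test_half_a val_test_half_b.
by rewrite omega_commutator_pairing ?x1_commg ?x2_commg // zz_commg_gen_pow; ring.
Qed.

End FiberTest.

Definition x1w : word Gen := [:: (i0, j0, false); (i2, j0, true)].
Definition x2w : word Gen := [:: (i0, j1, false); (i2, j1, true)].
Definition y1w : word Gen := [:: (i1, j0, false); (i2, j0, true)].
Definition y2w : word Gen := [:: (i1, j1, false); (i2, j1, true)].

Lemma inK_x1w : inK x1w. Proof. by move=> j; case: (ord2P j) => ->. Qed.
Lemma inK_x2w : inK x2w. Proof. by move=> j; case: (ord2P j) => ->. Qed.
Lemma inK_y1w : inK y1w. Proof. by move=> j; case: (ord2P j) => ->. Qed.
Lemma inK_y2w : inK y2w. Proof. by move=> j; case: (ord2P j) => ->. Qed.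

Section Presentation.
Variables (S : finType) (gens : S -> word Gen).
Hypothesis gens_inK : forall s, inK (gens s).

Lemma evalw_cons x u :
  evalw gens (x :: u) = (if x.2 then winv (gens x.1) else gens x.1) ++ evalw gens u.
Proof. by []. Qed.

Lemma evalw_morph (G : groupType) (h : word Gen -> G) u :
  {morph h : u v / u ++ v >-> u * v} -> {morph h : w / winv w >-> w^-1} ->
  h (evalw gens u) = weval (h \o gens) u.
Proof.
move=> hM hV; elim: u => [|[s b] u IHu].
  by apply: (mulgI (h [::])); rewrite -hM mulg1.
by rewrite evalw_cons hM IHu weval_cons; case: b; rewrite /= ?hV.
Qed.

Lemma weval_proj_evalw (G : groupType) (f : 'I_2 -> G) i u :
  weval f (proj i (evalw gens u)) = weval (fun s => weval f (proj i (gens s))) u.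
Proof.
apply: (@evalw_morph _ (fun w => weval f (proj i w))) => [v w | w].
  by rewrite proj_cat weval_cat.
by rewrite proj_winv weval_winv.
Qed.

Definition lift_gen (s : S) : cext fiber_cocycle := (insubd 1 (piw (gens s)), 0%Z).

Lemma lift_fst u : val (weval lift_gen u).1 = piw (evalw gens u).
Proof.
rewrite (evalw_morph u piw_cat piw_winv).
elim: u => [|x u IHu]; first by rewrite val1.
rewrite !weval_cons cext_fstM valM IHu; congr (_ * _).
have val_lift s : val (lift_gen s).1 = piw (gens s) by rewrite insubdK //; apply: balanced_piw.
by case: x => s [] /=; rewrite /eval_letter /= ?cext_fstV ?gmulfV val_lift.
Qed.

Lemma lift_fst_Geq u v : Geq (evalw gens u) v -> val (weval lift_gen u).1 = piw v.
Proof. by move=> uv; rewrite lift_fst (piw_Geq uv). Qed.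

Lemma lift_relator_central (R : seq (word S)) :
  (forall u, Geq (evalw gens u) [::] <-> null R u) ->
  forall r, r \in R -> (weval lift_gen r).1 = 1.
Proof.
move=> pres r r_R; apply: val_inj; rewrite (@lift_fst_Geq _ [::]) ?val1 //; apply/pres.
by exists [:: ([::], r, false)]; rewrite /vk_expr /= r_R /feq /conj_prod /= !cats0.
Qed.

Variables (w1 w2 w3 w4 : word S).
Hypotheses (w1_x1 : Geq (evalw gens w1) x1w) (w2_x2 : Geq (evalw gens w2) x2w)
           (w3_y1 : Geq (evalw gens w3) y1w) (w4_y2 : Geq (evalw gens w4) y2w).

Lemma test_word_trivial n : Geq (evalw gens (test_word w1 w2 w3 w4 n)) [::].
Proof.
move=> i; apply/feq_fg_word; rewrite /fg_word weval_proj_evalw weval_test_word.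
rewrite -!weval_proj_evalw -!/(fg_word _).
rewrite !(Geq_fg_word w1_x1, Geq_fg_word w2_x2, Geq_fg_word w3_y1, Geq_fg_word w4_y2).
by case: (ord3P i) => ->; rewrite /test_elem ?test_half1 ?test_half_diag ?comm1g ?commg1.
Qed.

Lemma lift_test_word n :
  (weval lift_gen (test_word w1 w2 w3 w4 n)).2 = (12 * Z.of_nat n ^ 4)%Z.
Proof.
have vx1 := lift_fst_Geq w1_x1; have vx2 := lift_fst_Geq w2_x2.
have vy1 := lift_fst_Geq w3_y1; have vy2 := lift_fst_Geq w4_y2.
rewrite weval_test_word /test_elem cext_commg !cext_fst_test_half.
  exact: fiber_omega_test_halves.
exact: commute_test_halves.
Qed.

End Presentation.

Local Close Scope group_scope.

Theorem proposition4p16 :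
  forall (S : finType) (gens : S -> word Gen) (R : seq (word S)),
    presents_K gens R ->
    dominates (Dehn R) (fun N => N ^ 4).
Proof.
move=> S gens R [gens_inK gens_onto pres].
have [w1 w1_x1] := gens_onto _ inK_x1w; have [w2 w2_x2] := gens_onto _ inK_x2w.
have [w3 w3_y1] := gens_onto _ inK_y1w; have [w4 w4_y2] := gens_onto _ inK_y2w.
pose M := relator_weight R (lift_gen gens).
pose C := 8 * (size w1 + size w2 + size w3 + size w4) + M + 1.
exists C; split=> [|N]; first by rewrite /C addn1.
have null_u : null R (test_word w1 w2 w3 w4 N) by apply/pres/test_word_trivial.
have := weval_snd_le_Area (lift_relator_central gens_inK pres) null_u.
rewrite lift_test_word // (_ : Z.abs_nat _ = 12 * N ^ 4); last by lia.
have Area_le : Area R (test_word w1 w2 w3 w4 N) <= Dehn R (C * N + C).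
  by apply: Area_le_Dehn null_u; rewrite size_test_word /C; nia.
have M_le_C : M <= C by rewrite /C; lia.
by move/leq_trans/(_ (leq_mul Area_le M_le_C)); lia.
Qed.
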